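(* Let $(Z,\to)$, $R$ and $H$ be as in the context. Then (i) $H=\mathrm{Aut}(Z,R)$; and (ii) the structure $(Z,R)$ is homogeneous, i.e. every isomorphism between finite substructures of $(Z,R)$ extends to an automorphism of $(Z,R)$.
   Context: Let $Z$ be a countable dense subset of the unit circle containing no two antipodal points, and for distinct $x,y\in Z$ put $x\to y$ iff the clockwise distance from $x$ to $y$ along the circle is less than the anticlockwise distance (this tournament is the countable dense local order). Define a ternary relation $R$ on $Z$ by $R(x;y,z)$ iff $(y\to x\wedge y\to z\wedge x\to z)\vee(z\to x\wedge z\to y\wedge x\to y)$. Let $H$ be the group of all permutations $g$ of $Z$ that either preserve $\to$ (automorphisms) or reverse it (i.e. $x\to y$ iff $y^g\to x^g$ for all distinct $x,y$). *)

From Stdlib Require Import Reals List.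
Open Scope R_scope.

(* The unit circle is parametrised by t in [0,1) via
   t |-> (cos (2 pi t), sin (2 pi t)); angles increase anticlockwise.
   A subset of the circle is thus a predicate Zs on R contained in [0,1). *)

Definition cw_dist (x y : R) : R := frac_part (x - y).
Definition acw_dist (x y : R) : R := frac_part (y - x).

Definition pts (Zs : R -> Prop) : Type := {t : R | Zs t}.

Definition arr {Zs : R -> Prop} (x y : pts Zs) : Prop :=
  cw_dist (proj1_sig x) (proj1_sig y) < acw_dist (proj1_sig x) (proj1_sig y).

Definition Rel {Zs : R -> Prop} (x y z : pts Zs) : Prop :=
  (arr y x /\ arr y z /\ arr x z) \/ (arr z x /\ arr z y /\ arr x y).

Definition on_circle (Zs : R -> Prop) : Prop :=
  forall t, Zs t -> 0 <= t < 1.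
Definition countable_set (Zs : R -> Prop) : Prop :=
  exists f : pts Zs -> nat, forall x y, f x = f y -> x = y.
Definition dense_in_circle (Zs : R -> Prop) : Prop :=
  forall a b, 0 <= a < b /\ b <= 1 -> exists t, Zs t /\ a < t < b.
Definition no_antipodal (Zs : R -> Prop) : Prop :=
  forall s t, Zs s -> Zs t -> s <> frac_part (t + / 2).

Definition is_perm {Zs : R -> Prop} (g : pts Zs -> pts Zs) : Prop :=
  exists h : pts Zs -> pts Zs, (forall x, h (g x) = x) /\ (forall x, g (h x) = x).

Definition in_H {Zs : R -> Prop} (g : pts Zs -> pts Zs) : Prop :=
  is_perm g /\
  ((forall x y, x <> y -> (arr x y <-> arr (g x) (g y))) \/
   (forall x y, x <> y -> (arr x y <-> arr (g y) (g x)))).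

Definition is_autR {Zs : R -> Prop} (g : pts Zs -> pts Zs) : Prop :=
  is_perm g /\ (forall x y z, Rel x y z <-> Rel (g x) (g y) (g z)).

Definition fin_partial_iso {Zs : R -> Prop} (l : list (pts Zs))
    (f : pts Zs -> pts Zs) : Prop :=
  (forall x y, In x l -> In y l -> f x = f y -> x = y) /\
  (forall x y z, In x l -> In y l -> In z l ->
     (Rel x y z <-> Rel (f x) (f y) (f z))).

(* The doubling map t |-> 2t mod 1 ([dbl]) together with the half of the circle containing t
   ([upper_half]) turns the local order into a dense linear order with a dense 2-colouring:
   r -> s iff (dbl s < dbl r iff r and s have the same colour).  To extend a finite partial
   isomorphism by a point x, rotate x to 0 and colour each pair (p, f p) by whether p and f p
   lie in the same half; the sign rule forces the two colour classes to be separated in the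
   target order, and a point of Z of the right colour whose double falls in the gap is an
   image for x.  Back and forth over the countable set Z then gives homogeneity, for
   arrow-reversing maps as well after composing with the mirror t |-> -t.
   For Aut(Z, R) = H: on three points R determines the arrows up to global reversal, so an
   R-automorphism preserves or reverses arrows consistently along pairs sharing a point, hence
   everywhere. *)

From Stdlib Require Import Reals RList Lra Lia List Bool.
From Stdlib Require Import Classical ClassicalEpsilon ProofIrrelevance.
Open Scope R_scope.

(** * The local order in circle coordinates *)

Lemma frac_part_id r : 0 <= r < 1 -> frac_part r = r.
Proof.
  intros H; unfold frac_part, Int_part.
  replace (up r) with 1%Z by (apply tech_up; simpl; lra); simpl; lra.
Qed.

Lemma frac_part_add_one r : -1 <= r < 0 -> frac_part r = r + 1.
Proof.
  intros H; unfold frac_part, Int_part.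
  replace (up r) with 0%Z by (apply tech_up; simpl; lra); simpl; lra.
Qed.

Lemma frac_part_sub_one r : 1 <= r < 2 -> frac_part r = r - 1.
Proof.
  intros H; unfold frac_part, Int_part.
  replace (up r) with 2%Z by (apply tech_up; simpl; lra); simpl; lra.
Qed.

Definition arrR (r s : R) : Prop := cw_dist r s < acw_dist r s.

Definition antipodal (r s : R) : Prop := r - s = 1/2 \/ s - r = 1/2.

Definition antipode_free (Z : R -> Prop) : Prop :=
  forall s t, Z s -> Z t -> s <> t -> ~ antipodal s t.

Lemma arrR_iff r s : 0 <= r < 1 -> 0 <= s < 1 ->
  arrR r s <-> (s < r /\ r - s < 1/2) \/ (r < s /\ s - r > 1/2).
Proof.
  intros Hr Hs; unfold arrR, cw_dist, acw_dist.
  destruct (Rtotal_order r s) as [H | [<- | H]].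
  - rewrite (frac_part_add_one (r - s)), (frac_part_id (s - r)) by lra; lra.
  - replace (r - r) with 0 by ring; lra.
  - rewrite (frac_part_id (r - s)), (frac_part_add_one (s - r)) by lra; lra.
Qed.

Lemma arrR_irrefl r : 0 <= r < 1 -> ~ arrR r r.
Proof. intros Hr; rewrite arrR_iff by exact Hr; lra. Qed.

Lemma arrR_tournament r s : 0 <= r < 1 -> 0 <= s < 1 -> r <> s -> ~ antipodal r s ->
  arrR r s <-> ~ arrR s r.
Proof. intros Hr Hs Hrs Ha; unfold antipodal in Ha; rewrite !arrR_iff by assumption; lra. Qed.

Definition dbl (t : R) : R := if Rlt_dec t (1/2) then 2 * t else 2 * t - 1.
Definition upper_half (t : R) : bool := if Rlt_dec t (1/2) then false else true.

Lemma dbl_range t : 0 <= t < 1 -> 0 <= dbl t < 1.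
Proof. unfold dbl; destruct (Rlt_dec t (1/2)); lra. Qed.

Lemma dbl_inj r s : 0 <= r < 1 -> 0 <= s < 1 -> r <> s -> ~ antipodal r s -> dbl r <> dbl s.
Proof. unfold dbl, antipodal; destruct (Rlt_dec r (1/2)), (Rlt_dec s (1/2)); lra. Qed.

Lemma arrR_dbl r s : 0 <= r < 1 -> 0 <= s < 1 -> r <> s -> ~ antipodal r s ->
  arrR r s <-> (dbl s < dbl r <-> upper_half r = upper_half s).
Proof.
  intros Hr Hs Hrs Ha; unfold antipodal in Ha; rewrite arrR_iff by assumption.
  unfold dbl, upper_half; destruct (Rlt_dec r (1/2)), (Rlt_dec s (1/2));
    (split; [intros H; split; intros; solve [lra | reflexivity | exfalso; lra]
            | intros [H1 H2]; first [ specialize (H2 eq_refl)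
                                    | apply imply_to_or in H1 as [H1 | H1]; [| discriminate] ];
              lra]).
Qed.

Definition rot (x a : R) : R := if Rle_dec x a then a - x else a - x + 1.

Section Rotation.
Variable x : R.
Hypothesis Hx : 0 <= x < 1.

Lemma rot_range a : 0 <= a < 1 -> 0 <= rot x a < 1.
Proof. unfold rot; destruct (Rle_dec x a); lra. Qed.

Lemma rot_pos a : 0 <= a < 1 -> a <> x -> 0 < rot x a.
Proof. unfold rot; destruct (Rle_dec x a); lra. Qed.

Lemma rot_inj a b : 0 <= a < 1 -> 0 <= b < 1 -> a <> b -> rot x a <> rot x b.
Proof. unfold rot; destruct (Rle_dec x a), (Rle_dec x b); lra. Qed.

Lemma rot_not_antipodal a b : 0 <= a < 1 -> 0 <= b < 1 ->
  ~ antipodal a b -> ~ antipodal (rot x a) (rot x b).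
Proof. unfold rot, antipodal; destruct (Rle_dec x a), (Rle_dec x b); lra. Qed.

Lemma arrR_rot a b : 0 <= a < 1 -> 0 <= b < 1 -> arrR a b <-> arrR (rot x a) (rot x b).
Proof.
  intros Ha Hb; rewrite !arrR_iff by (try apply rot_range; assumption).
  unfold rot; destruct (Rle_dec x a), (Rle_dec x b); lra.
Qed.

Lemma arrR_to_centre a : 0 <= a < 1 -> a <> x -> arrR a x <-> upper_half (rot x a) = false.
Proof.
  intros Ha Hax; rewrite (arrR_rot a x) by assumption.
  replace (rot x x) with 0 by (unfold rot; destruct (Rle_dec x x); lra).
  pose proof (rot_pos a Ha Hax); pose proof (rot_range a Ha).
  rewrite arrR_iff by lra; unfold upper_half.
  destruct (Rlt_dec (rot x a) (1/2)); split; intros; solve [lra | reflexivity | discriminate].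
Qed.
End Rotation.

Definition mirror (r : R) : R := if Req_EM_T r 0 then 0 else 1 - r.

Lemma mirror_range r : 0 <= r < 1 -> 0 <= mirror r < 1.
Proof. unfold mirror; destruct (Req_EM_T r 0); lra. Qed.

Lemma mirror_involutive r : 0 <= r < 1 -> mirror (mirror r) = r.
Proof. unfold mirror; destruct (Req_EM_T r 0), (Req_EM_T _ 0); lra. Qed.

Lemma arrR_mirror r s : 0 <= r < 1 -> 0 <= s < 1 -> arrR (mirror r) (mirror s) <-> arrR s r.
Proof.
  intros Hr Hs; rewrite !arrR_iff by (try apply mirror_range; assumption).
  unfold mirror; destruct (Req_EM_T r 0), (Req_EM_T s 0); lra.
Qed.

Lemma mirror_antipodal r s : 0 <= r < 1 -> 0 <= s < 1 ->
  antipodal (mirror r) (mirror s) -> antipodal r s.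
Proof. unfold mirror, antipodal; destruct (Req_EM_T r 0), (Req_EM_T s 0); lra. Qed.

(** * Back and forth *)

Section PartialIso.
Context {X Y : Type} (RX : X -> X -> Prop) (RY : Y -> Y -> Prop).

Definition partial_iso (ps : list (X * Y)) : Prop :=
  (forall p q, In p ps -> In q ps -> (fst p = fst q <-> snd p = snd q)) /\
  (forall p q, In p ps -> In q ps -> (RX (fst p) (fst q) <-> RY (snd p) (snd q))).

Lemma partial_iso_cons ps x y : partial_iso ps ->
  (forall p, In p ps -> (fst p = x <-> snd p = y)) ->
  (forall p, In p ps -> (RX (fst p) x <-> RY (snd p) y)) ->
  (forall p, In p ps -> (RX x (fst p) <-> RY y (snd p))) ->
  (RX x x <-> RY y y) -> partial_iso ((x, y) :: ps).
Proof.
  intros [Heq Hrel] Hxy Hto Hfrom Hxx; split; intros p q [<- | Hp] [<- | Hq]; simpl; auto.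
  - split; reflexivity.
  - specialize (Hxy q Hq); split; intros E; symmetry; apply Hxy; congruence.
Qed.

Lemma partial_iso_distinct ps p q : partial_iso ps -> In p ps -> In q ps -> p <> q ->
  fst p <> fst q /\ snd p <> snd q.
Proof.
  intros [Heq _] Hp Hq Hpq; specialize (Heq p q Hp Hq).
  destruct p, q; simpl in *; split; intros E; apply Hpq; f_equal; tauto.
Qed.

Lemma partial_iso_cons_mem ps x y : In (x, y) ps -> partial_iso ps -> partial_iso ((x, y) :: ps).
Proof.
  intros Hxy [Heq Hrel]; split; intros p q Hp Hq;
    [apply Heq | apply Hrel]; destruct Hp as [<- | Hp], Hq as [<- | Hq]; assumption.
Qed.
End PartialIso.

Lemma partial_iso_swap {X Y} (RX : X -> X -> Prop) (RY : Y -> Y -> Prop) ps :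
  partial_iso RX RY ps -> partial_iso RY RX (map (fun p => (snd p, fst p)) ps).
Proof.
  intros [Heq Hrel]; split; intros p q Hp Hq;
    apply in_map_iff in Hp as [p' [<- Hp]]; apply in_map_iff in Hq as [q' [<- Hq]]; simpl;
    symmetry; auto.
Qed.

Lemma partial_iso_converse {X Y} (RX : X -> X -> Prop) (RY : Y -> Y -> Prop) ps :
  partial_iso RX RY ps -> partial_iso (fun a b => RX b a) (fun a b => RY b a) ps.
Proof. intros [Heq Hrel]; split; intros p q Hp Hq; auto. Qed.

Lemma partial_iso_map {X Y X' Y'} (RX : X -> X -> Prop) (RY : Y -> Y -> Prop)
    (RX' : X' -> X' -> Prop) (RY' : Y' -> Y' -> Prop) (fx : X -> X') (fy : Y -> Y') ps :
  (forall a b, fx a = fx b <-> a = b) -> (forall a b, fy a = fy b <-> a = b) ->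
  (forall a b, RX' (fx a) (fx b) <-> RX a b) -> (forall a b, RY' (fy a) (fy b) <-> RY a b) ->
  partial_iso RX' RY' (map (fun p => (fx (fst p), fy (snd p))) ps) <-> partial_iso RX RY ps.
Proof.
  intros Ex Ey Rx Ry; set (f := fun p : X * Y => (fx (fst p), fy (snd p))); split.
  - intros [Heq Hrel]; split; intros p q Hp Hq;
      [rewrite <- Ex, <- Ey; apply (Heq (f p) (f q))
      | rewrite <- Rx, <- Ry; apply (Hrel (f p) (f q))];
      apply in_map; assumption.
  - intros [Heq Hrel]; split; intros p q Hp Hq;
      apply in_map_iff in Hp as [p' [<- Hp]]; apply in_map_iff in Hq as [q' [<- Hq]]; simpl;
      [rewrite Ex, Ey | rewrite Rx, Ry]; auto.
Qed.

Section BackAndForth.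
Context {X Y : Type} (RX : X -> X -> Prop) (RY : Y -> Y -> Prop).
Variables (cx : X -> nat) (cy : Y -> nat).
Hypothesis cx_inj : forall a b, cx a = cx b -> a = b.
Hypothesis cy_inj : forall a b, cy a = cy b -> a = b.
Hypothesis forth :
  forall ps, partial_iso RX RY ps -> forall x, exists y, partial_iso RX RY ((x, y) :: ps).
Hypothesis back :
  forall ps, partial_iso RX RY ps -> forall y, exists x, partial_iso RX RY ((x, y) :: ps).

Definition fin_iso := {ps | partial_iso RX RY ps}.

Definition add_dom (g : fin_iso) (x : X) : fin_iso :=
  let (y, Hy) := constructive_indefinite_description _ (forth _ (proj2_sig g) x) in
  exist _ ((x, y) :: proj1_sig g) Hy.

Definition add_rng (g : fin_iso) (y : Y) : fin_iso :=
  let (x, Hx) := constructive_indefinite_description _ (back _ (proj2_sig g) y) in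
  exist _ ((x, y) :: proj1_sig g) Hx.

Definition decode {Z : Type} (c : Z -> nat) (n : nat) : option Z :=
  match excluded_middle_informative (exists z, c z = n) with
  | left H => Some (proj1_sig (constructive_indefinite_description _ H))
  | right _ => None
  end.

Lemma decode_code {Z : Type} (c : Z -> nat) : (forall a b, c a = c b -> a = b) ->
  forall z, decode c (c z) = Some z.
Proof.
  intros Hc z; unfold decode; destruct excluded_middle_informative as [H | H].
  - destruct constructive_indefinite_description as [z' Hz']; simpl; f_equal; auto.
  - exfalso; eauto.
Qed.

Definition bf_step (n : nat) (g : fin_iso) : fin_iso :=
  let g' := match decode cx n with Some x => add_dom g x | None => g end in
  match decode cy n with Some y => add_rng g' y | None => g' end.

Fixpoint bf_chain (g : fin_iso) (n : nat) : fin_iso :=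
  match n with O => g | S n => bf_step n (bf_chain g n) end.

Variable g0 : fin_iso.
Notation chain n := (proj1_sig (bf_chain g0 n)).

Lemma bf_chain_mono n m p : (n <= m)%nat -> In p (chain n) -> In p (chain m).
Proof.
  induction 1 as [| m _ IH]; [auto | intros Hp; simpl].
  unfold bf_step, add_dom, add_rng.
  destruct (decode cx m), (decode cy m);
    repeat destruct constructive_indefinite_description; simpl; auto.
Qed.

Lemma bf_chain_dom x : exists y, In (x, y) (chain (S (cx x))).
Proof.
  simpl; unfold bf_step; rewrite decode_code by exact cx_inj; unfold add_dom, add_rng.
  destruct constructive_indefinite_description as [y Hy]; exists y.
  destruct (decode cy (cx x)); [destruct constructive_indefinite_description |]; simpl; auto.
Qed.

Lemma bf_chain_rng y : exists x, In (x, y) (chain (S (cy y))).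
Proof.
  simpl; unfold bf_step; rewrite decode_code by exact cy_inj; unfold add_rng.
  destruct constructive_indefinite_description as [x Hx]; exists x; simpl; auto.
Qed.

Lemma bf_chain_coherent n m p q : In p (chain n) -> In q (chain m) ->
  (fst p = fst q <-> snd p = snd q) /\ (RX (fst p) (fst q) <-> RY (snd p) (snd q)).
Proof.
  intros Hp Hq; destruct (proj2_sig (bf_chain g0 (n + m))) as [Heq Hrel].
  split; [apply Heq | apply Hrel];
    solve [ apply (bf_chain_mono n); [lia | assumption]
          | apply (bf_chain_mono m); [lia | assumption] ].
Qed.

Theorem back_and_forth : exists g : X -> Y,
  (exists h : Y -> X, (forall x, h (g x) = x) /\ (forall y, g (h y) = y)) /\
  (forall x x', RX x x' <-> RY (g x) (g x')) /\
  (forall p, In p (proj1_sig g0) -> g (fst p) = snd p).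
Proof.
  assert (Hdom : forall x, exists y n, In (x, y) (chain n))
    by (intros x; destruct (bf_chain_dom x); eauto).
  assert (Hrng : forall y, exists x n, In (x, y) (chain n))
    by (intros y; destruct (bf_chain_rng y); eauto).
  destruct (choice _ Hdom) as [g Hg], (choice _ Hrng) as [h Hh].
  exists g; split; [exists h; split | split].
  - intros x; destruct (Hg x) as [n Hn], (Hh (g x)) as [m Hm].
    symmetry; apply (bf_chain_coherent _ _ _ _ Hn Hm); reflexivity.
  - intros y; destruct (Hh y) as [n Hn], (Hg (h y)) as [m Hm].
    symmetry; apply (bf_chain_coherent _ _ _ _ Hn Hm); reflexivity.
  - intros x x'; destruct (Hg x) as [n Hn], (Hg x') as [m Hm].
    apply (bf_chain_coherent _ _ _ _ Hn Hm).
  - intros p Hp; destruct (Hg (fst p)) as [n Hn].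
    apply (bf_chain_coherent n 0 _ _ Hn Hp); reflexivity.
Qed.
End BackAndForth.

(** * One-point extension *)

(* [arrR_dbl] applied at both ends of an arrow-preserving pair, with the colours compared
   across the pair rather than within each side. *)
Lemma sign_rule_transfer (u1 u2 v1 v2 : R) (c1 c2 d1 d2 : bool) :
  u1 <> u2 -> v1 <> v2 ->
  ((u2 < u1 <-> c1 = c2) <-> (v2 < v1 <-> d1 = d2)) ->
  (v1 < v2 <-> (u1 < u2 <-> eqb c1 d1 = eqb c2 d2)).
Proof.
  intros Hu Hv.
  destruct (Rlt_dec u1 u2); [assert (~ u2 < u1) by lra | assert (u2 < u1) by lra];
  (destruct (Rlt_dec v1 v2); [assert (~ v2 < v1) by lra | assert (v2 < v1) by lra]);
  destruct c1, c2, d1, d2; simpl; firstorder congruence.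
Qed.

Section ColourClasses.
Context {T : Type} (S : T -> Prop) (U V : T -> R) (col : T -> bool).
Hypothesis sign_rule : forall p q, S p -> S q -> p <> q ->
  U p <> U q /\ V p <> V q /\ (V p < V q <-> (U p < U q <-> col p = col q)).

Lemma no_colour_sandwich a b c : S a -> S b -> S c ->
  U a < U b -> U b < U c -> col a = col c -> col a <> col b -> False.
Proof.
  intros Sa Sb Sc Hab Hbc Eac Nab.
  assert (a <> b) by (intros ->; lra); assert (b <> c) by (intros ->; lra);
  assert (a <> c) by (intros ->; lra).
  destruct (sign_rule a b) as [_ [Vab Kab]], (sign_rule b c) as [_ [Vbc Kbc]],
    (sign_rule a c) as [_ [_ Kac]]; try assumption.
  assert (~ V a < V b) by (intros Q; apply Nab, Kab; assumption).
  assert (~ V b < V c) by (intros Q; apply Nab; rewrite Eac; symmetry; apply Kbc; assumption).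
  assert (V a < V c) by (apply Kac; split; intros; [exact Eac | lra]).
  lra.
Qed.

Lemma colour_classes_split :
  exists c, forall p q, S p -> S q -> col p = c -> col q <> c -> V p < V q.
Proof.
  destruct (classic (forall p q, S p -> S q -> col p = false -> col q <> false -> V p < V q))
    as [H | H]; [exists false; exact H | exists true].
  intros k l Sk Sl Ck Cl.
  apply not_all_ex_not in H as [i H]; apply not_all_ex_not in H as [j H].
  apply imply_to_and in H as [Si H]; apply imply_to_and in H as [Sj H].
  apply imply_to_and in H as [Ci H]; apply imply_to_and in H as [Cj H].
  apply not_false_is_true in Cj; apply not_true_is_false in Cl.
  assert (i <> j) by congruence; assert (k <> l) by congruence; assert (i <> k) by congruence.
  destruct (sign_rule i j) as [_ [_ Kij]], (sign_rule k l) as [Ukl [Vkl _]],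
    (sign_rule l k) as [_ [_ Klk]], (sign_rule i k) as [Uik _]; auto.
  assert (Uij : U i < U j).
  { destruct (Rlt_dec (U i) (U j)) as [W | W]; [exact W | exfalso].
    apply H, Kij; split; intros; [lra | congruence]. }
  destruct (Rlt_dec (V k) (V l)) as [Q | Q]; [exact Q | exfalso].
  assert (Ukl' : U k < U l).
  { destruct (Rlt_dec (U k) (U l)) as [W | W]; [exact W | exfalso].
    assert (Vlk : V l < V k) by lra.
    apply Klk in Vlk; rewrite Ck, Cl in Vlk; discriminate (proj1 Vlk ltac:(lra)). }
  destruct (Rlt_dec (U i) (U k)).
  - apply (no_colour_sandwich i k l); auto; congruence.
  - apply (no_colour_sandwich k i j); auto; solve [lra | congruence].
Qed.
End ColourClasses.

Lemma list_max_attained (l : list R) : l <> nil -> exists m, In m l /\ forall v, In v l -> v <= m.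
Proof.
  intros Hl; exists (MaxRlist l); split; [| apply MaxRlist_P1].
  apply MaxRlist_P2; destruct l as [| v l]; [contradiction | exists v; left; reflexivity].
Qed.

Lemma list_min_attained (l : list R) : l <> nil -> exists m, In m l /\ forall v, In v l -> m <= v.
Proof.
  intros Hl; destruct (list_max_attained (map Ropp l)) as [m [Hm Hmax]].
  - destruct l; [contradiction | discriminate].
  - apply in_map_iff in Hm as [m' [<- Hm']]; exists m'; split; [exact Hm' |].
    intros v Hv; specialize (Hmax (- v) (in_map Ropp l v Hv)); lra.
Qed.

Lemma separating_gap {T} (ps : list T) (V : T -> R) (low : T -> bool) :
  (forall p, In p ps -> 0 <= V p < 1) ->
  (forall p q, In p ps -> In q ps -> low p = true -> low q = false -> V p < V q) ->
  (forall q, In q ps -> low q = false -> 0 < V q) ->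
  exists L U, 0 <= L < U /\ U <= 1 /\
    forall p, In p ps -> (low p = true -> V p <= L) /\ (low p = false -> U <= V p).
Proof.
  intros Hrange Hsep Hpos.
  destruct (list_max_attained (0 :: map V (filter low ps))) as [L [HL HLmax]]; [discriminate |].
  destruct (list_min_attained (1 :: map V (filter (fun p => negb (low p)) ps)))
    as [U [HU HUmin]]; [discriminate |].
  exists L, U; split; [split | split].
  - apply HLmax; left; reflexivity.
  - destruct HL as [<- | HL], HU as [<- | HU].
    + lra.
    + apply in_map_iff in HU as [q [<- Hq]]; apply filter_In in Hq as [Hq Lq].
      apply Hpos, negb_true_iff; assumption.
    + apply in_map_iff in HL as [p [<- Hp]]; apply filter_In in Hp; apply Hrange; tauto.
    + apply in_map_iff in HL as [p [<- Hp]]; apply filter_In in Hp as [Hp Lp].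
      apply in_map_iff in HU as [q [<- Hq]]; apply filter_In in Hq as [Hq Lq].
      apply Hsep, negb_true_iff; assumption.
  - apply HUmin; left; reflexivity.
  - intros p Hp; split; intros Lp.
    + apply HLmax, in_cons, in_map, filter_In; tauto.
    + apply HUmin, in_cons, in_map, filter_In; rewrite Lp; tauto.
Qed.

Lemma colour_gap {T} (ps : list T) (V : T -> R) (col : T -> bool) :
  (forall p, In p ps -> 0 <= V p < 1) ->
  (exists c, forall p q, In p ps -> In q ps -> col p = c -> col q <> c -> V p < V q) ->
  exists b L U, 0 <= L < U /\ U <= 1 /\
    forall p, In p ps -> (col p = b -> V p <= L) /\ (col p <> b -> U <= V p).
Proof.
  intros Hrange [c Hsep].
  assert (Hb : exists b, (forall p q, In p ps -> In q ps -> col p = b -> col q <> b -> V p < V q) /\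
                         (forall q, In q ps -> col q <> b -> 0 < V q)).
  { destruct (classic (exists p0, In p0 ps /\ col p0 = c)) as [[p0 [Hp0 Cp0]] | Hno].
    - exists c; split; [exact Hsep |].
      intros q Hq Cq; specialize (Hsep p0 q Hp0 Hq Cp0 Cq); specialize (Hrange p0 Hp0); lra.
    - assert (Hall : forall q, In q ps -> col q = negb c).
      { intros q Hq; destruct (Bool.bool_dec (col q) c) as [E | E];
          [exfalso; apply Hno; exists q; tauto | destruct (col q), c; tauto]. }
      exists (negb c); split; [intros p q _ Hq _ Cq | intros q Hq Cq];
        exfalso; exact (Cq (Hall q Hq)). }
  destruct Hb as [b [Hsepb Hposb]].
  destruct (separating_gap ps V (fun p => eqb (col p) b)) as [L [U [HLU [HU HC]]]];
    try assumption.
  - intros p q Hp Hq Lp Lq; apply eqb_prop in Lp; apply eqb_false_iff in Lq; auto.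
  - intros q Hq Lq; apply eqb_false_iff in Lq; auto.
  - exists b, L, U; split; [exact HLU | split; [exact HU |]].
    intros p Hp; destruct (HC p Hp) as [HL HH]; split; intros E;
      [apply HL, eqb_true_iff | apply HH, eqb_false_iff]; exact E.
Qed.

Lemma dbl_dense (Z : R -> Prop) (L U : R) (b : bool) :
  dense_in_circle Z -> 0 <= L < U -> U <= 1 ->
  exists t, Z t /\ L < dbl t < U /\ upper_half t = b.
Proof.
  intros Hd HLU HU.
  destruct (Hd ((L + if b then 1 else 0) / 2) ((U + if b then 1 else 0) / 2)) as [t [Zt Ht]];
    [destruct b; lra |].
  exists t; split; [exact Zt |].
  unfold dbl, upper_half; destruct b, (Rlt_dec t (1/2)); split; solve [lra | reflexivity].
Qed.

Lemma arrR_gap_transfer x a s t L U : 0 <= x < 1 -> 0 <= a < 1 -> a <> x ->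
  0 <= s < 1 -> 0 <= t < 1 -> s <> t -> ~ antipodal s t -> L < dbl t < U ->
  (eqb (upper_half (rot x a)) (upper_half s) = upper_half t -> dbl s <= L) ->
  (eqb (upper_half (rot x a)) (upper_half s) <> upper_half t -> U <= dbl s) ->
  arrR a x <-> arrR s t.
Proof.
  intros Hx Ha Hax Hs Ht Hst Hanti Hgap Hlow Hhigh.
  rewrite arrR_to_centre, arrR_dbl by assumption.
  destruct (upper_half (rot x a)), (upper_half s), (upper_half t); simpl in *;
    first [specialize (Hlow eq_refl) | specialize (Hhigh ltac:(discriminate))];
    split; intros; try split; intros; solve [lra | discriminate | reflexivity | exfalso; lra].
Qed.

Section DoubledCoordinates.
Variables (x : R) (ps : list (R * R)).
Hypothesis Hx : 0 <= x < 1.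
Hypothesis Hrange : forall p, In p ps -> 0 <= fst p < 1 /\ 0 <= snd p < 1.
Hypothesis Hanti : forall p q, In p ps -> In q ps -> p <> q ->
  ~ antipodal (fst p) (fst q) /\ ~ antipodal (snd p) (snd q).
Hypothesis Hiso : partial_iso arrR arrR ps.

Definition src_coord (p : R * R) : R := dbl (rot x (fst p)).
Definition tgt_coord (p : R * R) : R := dbl (snd p).
Definition same_half (p : R * R) : bool := eqb (upper_half (rot x (fst p))) (upper_half (snd p)).

Lemma doubled_sign_rule p q : In p ps -> In q ps -> p <> q ->
  src_coord p <> src_coord q /\ tgt_coord p <> tgt_coord q /\
  (tgt_coord p < tgt_coord q <-> (src_coord p < src_coord q <-> same_half p = same_half q)).
Proof.
  intros Hp Hq Hpq.
  destruct (partial_iso_distinct _ _ ps p q Hiso Hp Hq Hpq) as [Hfst Hsnd].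
  destruct (Hrange p Hp) as [Rp Sp], (Hrange q Hq) as [Rq Sq], (Hanti p q Hp Hq Hpq) as [Ap Aq].
  assert (Rp' := rot_range x Hx _ Rp); assert (Rq' := rot_range x Hx _ Rq).
  assert (Hrot : rot x (fst p) <> rot x (fst q)) by (apply rot_inj; assumption).
  assert (Arot : ~ antipodal (rot x (fst p)) (rot x (fst q)))
    by (apply rot_not_antipodal; assumption).
  unfold src_coord, tgt_coord, same_half.
  split; [apply dbl_inj; assumption | split; [apply dbl_inj; assumption |]].
  apply sign_rule_transfer; [apply dbl_inj; assumption .. |].
  rewrite <- arrR_dbl, <- arrR_dbl, <- arrR_rot by assumption.
  apply (proj2 Hiso); assumption.
Qed.
End DoubledCoordinates.

Lemma arrR_forth (Zx Zy : R -> Prop) :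
  on_circle Zx -> antipode_free Zx -> on_circle Zy -> antipode_free Zy -> dense_in_circle Zy ->
  forall ps, (forall p, In p ps -> Zx (fst p) /\ Zy (snd p)) -> partial_iso arrR arrR ps ->
  forall x, Zx x -> exists y, Zy y /\ partial_iso arrR arrR ((x, y) :: ps).
Proof.
  intros Rx Ax Ry Ay Dy ps Hps Hiso x Zx_x.
  destruct (classic (exists p, In p ps /\ fst p = x)) as [[[x0 y0] [Hp0 <-]] | Hnew].
  { exists y0; split; [apply (Hps _ Hp0) | apply partial_iso_cons_mem; assumption]. }
  assert (Hx := Rx x Zx_x).
  assert (Hrange : forall p, In p ps -> 0 <= fst p < 1 /\ 0 <= snd p < 1)
    by (intros p Hp; destruct (Hps p Hp); auto).
  assert (Hanti : forall p q, In p ps -> In q ps -> p <> q ->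
            ~ antipodal (fst p) (fst q) /\ ~ antipodal (snd p) (snd q)).
  { intros p q Hp Hq Hpq.
    destruct (partial_iso_distinct _ _ ps p q Hiso Hp Hq Hpq), (Hps p Hp), (Hps q Hq).
    split; [apply Ax | apply Ay]; assumption. }
  destruct (colour_gap ps tgt_coord (same_half x)) as [b [L [U [HLU [HU Hgap]]]]].
  { intros p Hp; apply dbl_range, Hrange, Hp. }
  { apply (colour_classes_split (fun p => In p ps) (src_coord x)).
    intros; apply (doubled_sign_rule x ps); assumption. }
  destruct (dbl_dense Zy L U b Dy HLU HU) as [t [Zt [Ht Hb]]].
  assert (Hts := Ry t Zt).
  assert (Hpt : forall p, In p ps -> snd p <> t).
  { intros p Hp E; destruct (Hgap p Hp) as [Hlow Hhigh]; unfold tgt_coord in *; rewrite E in *.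
    destruct (Bool.bool_dec (same_half x p) b); [specialize (Hlow e) | specialize (Hhigh n)]; lra. }
  assert (Hpx : forall p, In p ps -> fst p <> x) by (intros p Hp E; apply Hnew; eauto).
  assert (Hto : forall p, In p ps -> arrR (fst p) x <-> arrR (snd p) t).
  { intros p Hp; destruct (Hrange p Hp), (Hps p Hp), (Hgap p Hp) as [Hlow Hhigh].
    apply (arrR_gap_transfer x (fst p) (snd p) t L U); try assumption;
      [apply Hpx | apply Hpt | apply Ay | rewrite Hb | rewrite Hb]; auto. }
  exists t; split; [exact Zt |]; apply partial_iso_cons; [exact Hiso | | exact Hto | |].
  - intros p Hp; split; intros E; exfalso; [exact (Hpx p Hp E) | exact (Hpt p Hp E)].
  - intros p Hp; destruct (Hrange p Hp), (Hps p Hp).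
    assert (x <> fst p) by (intros E; apply (Hpx p Hp); auto).
    assert (t <> snd p) by (intros E; apply (Hpt p Hp); auto).
    rewrite (arrR_tournament x (fst p)), (arrR_tournament t (snd p)), (Hto p Hp)
      by first [assumption | apply Ax; assumption | apply Ay; assumption].
    tauto.
  - split; intros H; exfalso; [apply (arrR_irrefl x) | apply (arrR_irrefl t)]; assumption.
Qed.

(** * The points of Z *)

Section CirclePoints.
Variable Zs : R -> Prop.
Hypothesis Hcirc : on_circle Zs.
Hypothesis Hdense : dense_in_circle Zs.
Hypothesis Hanti : no_antipodal Zs.

Lemma pts_eq (x y : pts Zs) : proj1_sig x = proj1_sig y -> x = y.
Proof.
  destruct x as [a Ha], y as [b Hb]; simpl; intros <-; f_equal; apply proof_irrelevance.
Qed.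

Lemma pts_range (x : pts Zs) : 0 <= proj1_sig x < 1.
Proof. apply Hcirc, proj2_sig. Qed.

Lemma antipode_free_Zs : antipode_free Zs.
Proof.
  intros s t Hs Ht Hst; pose proof (Hcirc s Hs); pose proof (Hcirc t Ht).
  intros [E | E]; [apply (Hanti t s Ht Hs) | apply (Hanti s t Hs Ht)].
  - destruct (Rlt_dec s (1/2)); [rewrite frac_part_id | rewrite frac_part_sub_one]; lra.
  - destruct (Rlt_dec t (1/2)); [rewrite frac_part_id | rewrite frac_part_sub_one]; lra.
Qed.

Lemma arr_tournament (x y : pts Zs) : x <> y -> arr x y <-> ~ arr y x.
Proof.
  intros Hxy; apply arrR_tournament; try apply pts_range.
  - intros E; apply Hxy, pts_eq, E.
  - apply antipode_free_Zs; try apply proj2_sig; intros E; apply Hxy, pts_eq, E.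
Qed.

Lemma arr_irrefl (x : pts Zs) : ~ arr x x.
Proof. apply arrR_irrefl, pts_range. Qed.

Definition orient (rev : bool) (u v : pts Zs) : Prop := if rev then arr v u else arr u v.

Lemma orient_irrefl rev (y : pts Zs) : ~ orient rev y y.
Proof. destruct rev; apply arr_irrefl. Qed.

(* Reversing arrows is the mirror image t |-> -t of the circle. *)
Definition coord (rev : bool) (y : pts Zs) : R :=
  if rev then mirror (proj1_sig y) else proj1_sig y.

Definition coord_image (rev : bool) (t : R) : Prop := exists y, coord rev y = t.

Lemma coord_range rev y : 0 <= coord rev y < 1.
Proof. destruct rev; simpl; [apply mirror_range |]; apply pts_range. Qed.

Lemma coord_inj rev y y' : coord rev y = coord rev y' <-> y = y'.
Proof.
  split; [| intros ->; reflexivity].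
  intros E; apply pts_eq; destruct rev; simpl in E; [| exact E].
  rewrite <- (mirror_involutive (proj1_sig y)), <- (mirror_involutive (proj1_sig y'))
    by apply pts_range.
  congruence.
Qed.

Lemma arrR_coord rev y y' : arrR (coord rev y) (coord rev y') <-> orient rev y y'.
Proof. destruct rev; simpl; [apply arrR_mirror; apply pts_range | reflexivity]. Qed.

Lemma coord_image_on_circle rev : on_circle (coord_image rev).
Proof. intros t [y <-]; apply coord_range. Qed.

Lemma coord_image_antipode_free rev : antipode_free (coord_image rev).
Proof.
  intros s t [y <-] [y' <-] Hst.
  assert (Hyy' : proj1_sig y <> proj1_sig y')
    by (intros E; apply Hst; f_equal; apply pts_eq, E).
  assert (A := antipode_free_Zs _ _ (proj2_sig y) (proj2_sig y') Hyy').
  destruct rev; simpl; [intros Hm; apply A, mirror_antipodal, Hm; apply pts_range | exact A].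
Qed.

Lemma coord_image_dense rev : dense_in_circle (coord_image rev).
Proof.
  intros a b Hab; destruct rev.
  - destruct (Hdense (1 - b) (1 - a)) as [t [Zt Ht]]; [lra |].
    exists (mirror t); split; [exists (exist _ t Zt); reflexivity |].
    unfold mirror; destruct (Req_EM_T t 0); lra.
  - destruct (Hdense a b Hab) as [t [Zt Ht]].
    exists t; split; [exists (exist _ t Zt); reflexivity | exact Ht].
Qed.

Lemma orient_forth rev ps : partial_iso (@arr Zs) (orient rev) ps ->
  forall x, exists y, partial_iso (@arr Zs) (orient rev) ((x, y) :: ps).
Proof.
  set (f := fun p : pts Zs * pts Zs => (proj1_sig (fst p), coord rev (snd p))).
  assert (Hmap : forall qs,
            partial_iso arrR arrR (map f qs) <-> partial_iso (@arr Zs) (orient rev) qs).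
  { intros qs; apply partial_iso_map; [| apply coord_inj | reflexivity | apply arrR_coord].
    split; [apply pts_eq | intros ->; reflexivity]. }
  intros Hps x; apply Hmap in Hps.
  destruct (arrR_forth Zs (coord_image rev) Hcirc antipode_free_Zs (coord_image_on_circle rev)
              (coord_image_antipode_free rev) (coord_image_dense rev) (map f ps))
    with (x := proj1_sig x) as [y' [[y <-] Hy]]; try assumption.
  - intros p Hp; apply in_map_iff in Hp as [q [<- Hq]]; unfold f; simpl; split;
      [apply proj2_sig | exists (snd q); reflexivity].
  - apply proj2_sig.
  - exists y; apply Hmap, Hy.
Qed.

Lemma partial_iso_orient_sym rev qs :
  partial_iso (orient rev) (@arr Zs) qs -> partial_iso (@arr Zs) (orient rev) qs.
Proof. intros H; destruct rev; [exact (partial_iso_converse _ _ _ H) | exact H]. Qed.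

Lemma orient_back rev ps : partial_iso (@arr Zs) (orient rev) ps ->
  forall y, exists x, partial_iso (@arr Zs) (orient rev) ((x, y) :: ps).
Proof.
  set (swap := fun p : pts Zs * pts Zs => (snd p, fst p)).
  assert (Hswap : forall qs, map swap (map swap qs) = qs).
  { intros qs; rewrite map_map; erewrite map_ext; [apply map_id | intros [a b]; reflexivity]. }
  intros Hps y.
  destruct (orient_forth rev (map swap ps)) with (x := y) as [x Hx].
  { apply partial_iso_orient_sym, partial_iso_swap, Hps. }
  exists x; rewrite <- (Hswap ((x, y) :: ps)).
  apply partial_iso_orient_sym, partial_iso_swap, Hx.
Qed.
End CirclePoints.

(** * Automorphisms of (Z, R) *)

(* Reflecting propositions into bool lets the truth table of [triangle_logic] be decided
   by computation. *)
Definition truth (P : Prop) : bool := if excluded_middle_informative P then true else false.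

Lemma truth_spec (P : Prop) : P <-> truth P = true.
Proof.
  unfold truth; destruct excluded_middle_informative; split; intros; tauto || discriminate.
Qed.

Lemma truth_inj (P Q : Prop) : truth P = truth Q <-> (P <-> Q).
Proof.
  unfold truth; destruct (excluded_middle_informative P), (excluded_middle_informative Q);
    split; intros; solve [tauto | reflexivity | discriminate | exfalso; tauto].
Qed.

Lemma truth_iff (P Q : Prop) : truth (P <-> Q) = eqb (truth P) (truth Q).
Proof.
  apply eq_true_iff_eq; rewrite <- truth_spec, eqb_true_iff, truth_inj; reflexivity.
Qed.

Lemma truth_rel_shape (P1 P2 P3 P4 P5 P6 : Prop) :
  truth (P1 /\ P2 /\ P3 \/ P4 /\ P5 /\ P6) =
  truth P1 && truth P2 && truth P3 || truth P4 && truth P5 && truth P6.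
Proof.
  apply eq_true_iff_eq; rewrite <- truth_spec, orb_true_iff, !andb_true_iff, <- !truth_spec.
  tauto.
Qed.

Lemma triangle_logic (a b c a' b' c' : bool) :
  negb a && b && c || negb c && negb b && a = negb a' && b' && c' || negb c' && negb b' && a' ->
  a && c && b || negb b && negb c && negb a = a' && c' && b' || negb b' && negb c' && negb a' ->
  c && a && negb b || b && negb a && negb c = c' && a' && negb b' || b' && negb a' && negb c' ->
  eqb a a' = eqb b b'.
Proof. destruct a, b, c, a', b', c'; simpl; congruence. Qed.

Section Automorphisms.
Variable Zs : R -> Prop.
Hypothesis Hcirc : on_circle Zs.
Hypothesis Hanti : no_antipodal Zs.

Lemma truth_arr_swap (x y : pts Zs) : x <> y -> truth (arr y x) = negb (truth (arr x y)).
Proof.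
  intros Hxy; apply eq_true_iff_eq; rewrite negb_true_iff, <- not_true_iff_false, <- !truth_spec.
  rewrite (arr_tournament Zs Hcirc Hanti y x) by auto; tauto.
Qed.

(* On three points the tournament is a 3-cycle, where R is empty, or transitive, where R
   names the middle vertex; either way R fixes the arrows up to global reversal. *)
Lemma triangle_orientation (g : pts Zs -> pts Zs) (x y z : pts Zs) :
  x <> y -> y <> z -> x <> z -> g x <> g y -> g y <> g z -> g x <> g z ->
  (Rel x y z <-> Rel (g x) (g y) (g z)) -> (Rel y x z <-> Rel (g y) (g x) (g z)) ->
  (Rel z x y <-> Rel (g z) (g x) (g y)) ->
  ((arr x y <-> arr (g x) (g y)) <-> (arr y z <-> arr (g y) (g z))).
Proof.
  intros Nxy Nyz Nxz Gxy Gyz Gxz H1 H2 H3.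
  apply truth_inj in H1, H2, H3; apply truth_inj; rewrite !truth_iff.
  unfold Rel in H1, H2, H3; rewrite !truth_rel_shape in H1, H2, H3.
  rewrite (truth_arr_swap x y), (truth_arr_swap y z), (truth_arr_swap x z),
    (truth_arr_swap (g x) (g y)), (truth_arr_swap (g y) (g z)), (truth_arr_swap (g x) (g z))
    in H1, H2, H3 by assumption.
  apply triangle_logic with (c := truth (arr x z)) (c' := truth (arr (g x) (g z))); assumption.
Qed.

Lemma orientation_constant (P : pts Zs -> Prop) (g : pts Zs -> pts Zs) :
  (forall x y, P x -> P y -> g x = g y -> x = y) ->
  (forall x y z, P x -> P y -> P z -> (Rel x y z <-> Rel (g x) (g y) (g z))) ->
  exists rev, forall x y, P x -> P y -> x <> y -> (arr x y <-> orient Zs rev (g x) (g y)).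
Proof.
  intros Hinj HR.
  set (pres := fun x y => arr x y <-> arr (g x) (g y)).
  assert (Hg : forall x y, P x -> P y -> x <> y -> g x <> g y) by eauto.
  assert (Hsym : forall x y, P x -> P y -> x <> y -> (pres x y <-> pres y x)).
  { intros x y Px Py Hxy; unfold pres.
    rewrite (arr_tournament Zs Hcirc Hanti x y), (arr_tournament Zs Hcirc Hanti (g x) (g y))
      by auto.
    tauto. }
  assert (Hpivot : forall a b d, P a -> P b -> P d -> a <> b -> a <> d -> (pres a b <-> pres a d)).
  { intros a b d Pa Pb Pd Hab Had; destruct (classic (b = d)) as [<- | Hbd]; [reflexivity |].
    rewrite (Hsym a b) by assumption.
    apply triangle_orientation; auto. }
  assert (Hall : forall a b c d, P a -> P b -> P c -> P d -> a <> b -> c <> d ->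
            (pres a b <-> pres c d)).
  { intros a b c d Pa Pb Pc Pd Hab Hcd; destruct (classic (a = c)) as [<- | Hac]; [auto |].
    rewrite (Hpivot a b c), (Hsym a c), (Hpivot c a d); auto. }
  destruct (classic (exists x0 y0, P x0 /\ P y0 /\ x0 <> y0 /\ ~ pres x0 y0))
    as [[x0 [y0 [Px0 [Py0 [Hxy0 Hno]]]]] | Hyes]; [exists true | exists false];
    intros x y Px Py Hxy; simpl.
  - assert (~ pres x y) by (rewrite (Hall x y x0 y0); auto).
    rewrite (arr_tournament Zs Hcirc Hanti (g y) (g x)) by auto.
    unfold pres in *; tauto.
  - apply NNPP; intros Hno; apply Hyes; exists x, y; auto.
Qed.

Lemma orient_on_all rev (g : pts Zs -> pts Zs) :
  (forall x y, x <> y -> (arr x y <-> orient Zs rev (g x) (g y))) ->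
  forall x y, arr x y <-> orient Zs rev (g x) (g y).
Proof.
  intros H x y; destruct (classic (x = y)) as [<- | Hxy]; [| auto].
  split; intros Q; exfalso;
    [apply (arr_irrefl Zs Hcirc x) | apply (orient_irrefl Zs Hcirc rev (g x))]; exact Q.
Qed.

Lemma Rel_orient rev (g : pts Zs -> pts Zs) :
  (forall x y, arr x y <-> orient Zs rev (g x) (g y)) ->
  forall x y z, Rel x y z <-> Rel (g x) (g y) (g z).
Proof.
  intros H x y z; unfold Rel.
  rewrite (H y x), (H y z), (H x z), (H z x), (H z y), (H x y); destruct rev; simpl; tauto.
Qed.

Lemma in_H_iff_orient (g : pts Zs -> pts Zs) :
  in_H g <-> is_perm g /\ exists rev, forall x y, x <> y -> (arr x y <-> orient Zs rev (g x) (g y)).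
Proof.
  split; intros [Hperm H]; split; try assumption.
  - destruct H as [H | H]; [exists false | exists true]; exact H.
  - destruct H as [[|] H]; [right | left]; exact H.
Qed.

Lemma in_H_iff_is_autR (g : pts Zs -> pts Zs) : in_H g <-> is_autR g.
Proof.
  rewrite in_H_iff_orient; split.
  - intros [Hperm [rev H]]; split; [exact Hperm |].
    apply (Rel_orient rev), orient_on_all, H.
  - intros [Hperm HR]; split; [exact Hperm |].
    destruct (orientation_constant (fun _ => True) g) as [rev H]; [| auto | eauto].
    destruct Hperm as [h [Hhg _]]; intros x y _ _ E; rewrite <- (Hhg x), <- (Hhg y), E; reflexivity.
Qed.
End Automorphisms.

Lemma Z_homogeneous (Zs : R -> Prop) :
  on_circle Zs -> countable_set Zs -> dense_in_circle Zs -> no_antipodal Zs ->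
  forall (l : list (pts Zs)) (f : pts Zs -> pts Zs), fin_partial_iso l f ->
  exists g, is_autR g /\ (forall x, In x l -> g x = f x).
Proof.
  intros Hcirc [c Hc] Hdense Hanti l f [Hinj HR].
  destruct (orientation_constant Zs Hcirc Hanti (fun x => In x l) f Hinj HR) as [rev Hrev].
  assert (Hps : partial_iso arr (orient Zs rev) (map (fun x => (x, f x)) l)).
  { split; intros p q Hp Hq; apply in_map_iff in Hp as [x [<- Hx]];
      apply in_map_iff in Hq as [y [<- Hy]]; simpl.
    - split; [intros ->; reflexivity | apply Hinj; assumption].
    - destruct (classic (x = y)) as [<- | Hxy]; [| apply Hrev; assumption].
      split; intros Q; exfalso;
        [apply (arr_irrefl Zs Hcirc x) | apply (orient_irrefl Zs Hcirc rev (f x))]; exact Q. }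
  destruct (back_and_forth arr (orient Zs rev) c c Hc Hc
              (orient_forth Zs Hcirc Hdense Hanti rev) (orient_back Zs Hcirc Hdense Hanti rev)
              (exist _ _ Hps)) as [g [Hperm [Harr Hext]]].
  exists g; split.
  - apply in_H_iff_is_autR, in_H_iff_orient; try assumption.
    split; [exact Hperm | exists rev; intros; apply Harr].
  - intros x Hx; apply (Hext (x, f x)), (in_map (fun x => (x, f x))); exact Hx.
Qed.

Theorem lemma3p12 (Zs : R -> Prop)
  (Hcirc : on_circle Zs) (Hcount : countable_set Zs)
  (Hdense : dense_in_circle Zs) (Hanti : no_antipodal Zs) :
  (forall g : pts Zs -> pts Zs, in_H g <-> is_autR g) /\
  (forall (l : list (pts Zs)) (f : pts Zs -> pts Zs),
     fin_partial_iso l f ->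
     exists g : pts Zs -> pts Zs, is_autR g /\ (forall x, In x l -> g x = f x)).
Proof.
  split.
  - apply in_H_iff_is_autR; assumption.
  - apply Z_homogeneous; assumption.
Qed.
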